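(* Let $R$ be a ring such that $2$ is not invertible in $R$. Then $R$ is a GSWNC ring if and only if $R$ is a GSNC ring or $R$ is a strongly weakly nil-clean ring.
   Context: All rings are associative with identity. An element $a$ of a ring is strongly nil-clean if $a = e + q$ with $e$ idempotent, $q$ nilpotent and $eq = qe$; it is strongly weakly nil-clean if there exist an idempotent $e$ and a nilpotent $q$ with $eq = qe$ such that $a = q + e$ or $a = q - e$. A ring is strongly weakly nil-clean if all its elements are strongly weakly nil-clean; it is GSNC if every non-invertible element is strongly nil-clean, and GSWNC if every non-invertible element is strongly weakly nil-clean. *)

From HB Require Import structures.
From mathcomp Require Import all_boot all_order all_algebra.
Set Implicit Arguments. Unset Strict Implicit. Unset Printing Implicit Defensive.
Import GRing.Theory.
Local Open Scope ring_scope.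

Definition idempotent_el (R : unitRingType) (e : R) : Prop := e * e = e.
Definition nilpotent_el (R : unitRingType) (q : R) : Prop := exists n : nat, q ^+ n = 0.

Definition strongly_nil_clean_el (R : unitRingType) (a : R) : Prop :=
  exists e q : R, [/\ idempotent_el e, nilpotent_el q, e * q = q * e & a = e + q].

Definition strongly_weakly_nil_clean_el (R : unitRingType) (a : R) : Prop :=
  exists e q : R, [/\ idempotent_el e, nilpotent_el q, e * q = q * e &
                      a = q + e \/ a = q - e].

Definition strongly_weakly_nil_clean_ring (R : unitRingType) : Prop :=
  forall a : R, strongly_weakly_nil_clean_el a.

Definition GSNC (R : unitRingType) : Prop :=
  forall a : R, a \isn't a GRing.unit -> strongly_nil_clean_el a.

Definition GSWNC (R : unitRingType) : Prop :=
  forall a : R, a \isn't a GRing.unit -> strongly_weakly_nil_clean_el a.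

From mathcomp Require Import all_boot all_order all_algebra.
Set Implicit Arguments. Unset Strict Implicit. Unset Printing Implicit Defensive.
Import GRing.Theory.
Local Open Scope ring_scope.

(* Since 2 is not a unit, 2 = q + e or 2 = q - e with e idempotent, q nilpotent, e q = q e.
   If 2 = q + e then e = e q is nilpotent, so e = 0 and 2 is nilpotent; then a = q - e can be
   rewritten a = e + (q - 2 e), so strongly weakly nil-clean elements are strongly nil-clean.
   If 2 = q - e then e q = 3 e and (1 - e) q = 2 (1 - e), so 3^n e = 0 = 2^n (1 - e): every
   e x (1 - e) and (1 - e) x e is killed by coprime integers, hence e is central and R splits
   as e R x (1 - e)R with 2 nilpotent in the second factor; 1 - e <> 0 because 3^n = 0 would
   make 2 a unit.  For any x, e x and (1 - e) x are non-units (if e <> 0); +-(1 - e) x are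
   strongly nil-clean and so is one of +-e x, so one of +-x is strongly nil-clean. *)

Lemma coprime_mulrn_eq0 (V : zmodType) (y : V) m n :
  coprime m n -> y *+ m = 0 -> y *+ n = 0 -> y = 0.
Proof.
case: m => [|m]; first by rewrite /coprime gcd0n => /eqP -> _.
move=> /eqP cop ym yn; have [a _ /dvdnP [k hk]] := Bezoutl n (ltn0Sn m).
rewrite cop in hk.
have : y *+ (1 + a * n) = 0 by rewrite hk mulnC mulrnA ym mul0rn.
by rewrite mulrnDr mulnC mulrnA yn mul0rn addr0.
Qed.

Lemma coprime_natr_unit (R : unitRingType) p n :
  coprime p n -> p%:R = 0 :> R -> (n%:R : R) \is a GRing.unit.
Proof.
case: p => [|p]; first by rewrite /coprime gcd0n => /eqP -> _; exact: unitr1.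
move=> /eqP cop p0; have [a _ /dvdnP [k hk]] := Bezoutl n (ltn0Sn p).
rewrite cop in hk.
have inv : (a * n)%:R = - 1 :> R.
  by apply/eqP; rewrite -addr_eq0 -mulrSr -add1n hk natrM p0 mulr0.
by apply/unitrP; exists (- a%:R); rewrite mulrN mulNr -!natrM (mulnC n) inv opprK.
Qed.

Section StronglyNilClean.
Variable R : unitRingType.
Implicit Types a b c d e u v w x : R.

Definition central c := forall x, GRing.comm c x.

Lemma central1 : central 1.
Proof. by move=> x; apply/commr_sym/commr1. Qed.

Lemma centralC c : central c -> central (1 - c).
Proof. by move=> hc x; apply/commr_sym/commrD; [exact: commr1 | exact/commrN/commr_sym]. Qed.

Lemma central_mul_nonunit c d x :
  central c -> c * d = 0 -> d != 0 -> c * x \isn't a GRing.unit.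
Proof.
move=> hc cd; apply: contraNN => ux; apply/eqP.
by rewrite -[d]mul1r -(mulVr ux) -mulrA (hc x) -mulrA cd !mulr0.
Qed.

Lemma nilpotentN a : nilpotent_el a -> nilpotent_el (- a).
Proof. by move=> [n an]; exists n; rewrite exprNn an mulr0. Qed.

Lemma nilpotentMl c a : GRing.comm c a -> nilpotent_el a -> nilpotent_el (c * a).
Proof. by move=> ca [n an]; exists n; rewrite exprMn_comm // an mulr0. Qed.

Lemma nilpotentD a b :
  GRing.comm a b -> nilpotent_el a -> nilpotent_el b -> nilpotent_el (a + b).
Proof.
have exprW x k l : x ^+ k = 0 -> (k <= l)%N -> x ^+ l = 0.
  by move=> xk /subnKC <-; rewrite exprD xk mul0r.
move=> ab [n an] [m bm]; exists (n + m)%N; rewrite exprDn_comm // big1 // => i _.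
have [le_mi|lt_im] := leqP m i; first by rewrite (exprW _ _ _ bm le_mi) mulr0 mul0rn.
have le_n : (n <= n + m - i)%N by rewrite -addnBA ?leq_addr // ltnW.
by rewrite (exprW _ _ _ an le_n) mul0r mul0rn.
Qed.

Lemma idempotentX e n : idempotent_el e -> e ^+ n.+1 = e.
Proof. by move=> ee; elim: n => // n IH; rewrite exprS IH ee. Qed.

Lemma idempotent_nilpotent_eq0 e : idempotent_el e -> nilpotent_el e -> e = 0.
Proof. by move=> ee [n en]; rewrite -(idempotentX n ee) exprS en mulr0. Qed.

Lemma idempotent_nilpotent_mulrn e k :
  idempotent_el e -> nilpotent_el (e *+ k) -> exists n, e *+ k ^ n = 0.
Proof.
move=> ee [n ekn]; exists n.
by rewrite -(idempotentX n ee) exprS -mulrnAr -exprMn_n ekn mulr0.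
Qed.

Lemma swncE a :
  strongly_weakly_nil_clean_el a <->
  strongly_nil_clean_el a \/ strongly_nil_clean_el (- a).
Proof.
split=> [[e [q [ee nq eq [->|->]]]] | [[e [q [ee nq eq ->]]] | [e [q [ee nq eq ea]]]]].
- by left; exists e, q; split=> //; rewrite addrC.
- right; exists e, (- q); split=> //; first exact: nilpotentN.
    by rewrite mulrN eq mulNr.
  by rewrite opprB addrC.
- by exists e, q; split=> //; left; rewrite addrC.
- exists e, (- q); split=> //; first exact: nilpotentN.
    by rewrite mulrN eq mulNr.
  by right; rewrite -[a]opprK ea opprD addrC.
Qed.

Lemma mulr_central_idem e a b :
  central e -> idempotent_el e -> (e * a) * (e * b) = e * (a * b).
Proof. by move=> ce ee; rewrite -mulrA (mulrA a) -(ce a) -mulrA !mulrA ee. Qed.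

Lemma mulr_central_orth e d a b : central e -> e * d = 0 -> (e * a) * (d * b) = 0.
Proof. by move=> ce ed; rewrite (ce a) -mulrA (mulrA e) ed mul0r mulr0. Qed.

Lemma commr_central c d a b :
  central c -> central d -> GRing.comm a b -> GRing.comm (c * a) (d * b).
Proof.
move=> cc cd ab; rewrite /GRing.comm -!mulrA (mulrA a) -(cd a) -mulrA ab.
by rewrite (mulrA b) -(cc b) -mulrA !mulrA (cc d).
Qed.

(* If [w = i + q], then [- w = c * i + (- (c * q) - (c * i) *+ 2)]. *)
Lemma sncN_corner c w :
  central c -> idempotent_el c -> nilpotent_el (c *+ 2) -> c * w = w ->
  strongly_nil_clean_el w -> strongly_nil_clean_el (- w).
Proof.
move=> cc idc n2c cw [i [q [ii nq iq wE]]]; rewrite wE in cw *.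
have ciq : GRing.comm (c * i) (c * q) by apply: commr_central.
have c2i : GRing.comm (c * i) ((c * i) *+ 2) by apply/commrMn/commr_refl.
exists (c * i), (- (c * q) - (c * i) *+ 2); split.
- by rewrite /idempotent_el mulr_central_idem // ii.
- apply: nilpotentD; first exact/commrN/commr_sym/commrN/commr_sym/commrMn/commr_sym.
    exact/nilpotentN/nilpotentMl.
  apply/nilpotentN; rewrite (cc i) -mulrnAr; apply: nilpotentMl => //.
  exact/commrMn/commr_sym/cc.
- by apply: commrD; apply: commrN.
- by rewrite -{1}cw mulrDr mulr2n !opprD addrCA (addrA (c * i)) subrr add0r addrC.
Qed.

Lemma snc_corner_sum e u v :
  central e -> idempotent_el e ->
  strongly_nil_clean_el u -> strongly_nil_clean_el v ->
  strongly_nil_clean_el (e * u + (1 - e) * v).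
Proof.
move=> ce ee [i1 [q1 [ii1 nq1 iq1 ->]]] [i2 [q2 [ii2 nq2 iq2 ->]]].
set f := 1 - e; have cf : central f by exact: centralC.
have ef : e * f = 0 by rewrite mulrBr mulr1 ee subrr.
have fe : f * e = 0 by rewrite mulrBl mul1r ee subrr.
have ff : idempotent_el f by rewrite /idempotent_el mulrBr mulr1 fe subr0.
clearbody f.
exists (e * i1 + f * i2), (e * q1 + f * q2); split.
- by rewrite /idempotent_el mulrDl !mulrDr !mulr_central_idem // ii1 ii2
    !mulr_central_orth // addr0 add0r.
- apply: nilpotentD; [|exact: nilpotentMl|exact: nilpotentMl].
  by rewrite /GRing.comm !mulr_central_orth.
- by rewrite mulrDl !mulrDr !mulrDl !mulr_central_idem // !mulr_central_orth // iq1 iq2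
    !addr0 !add0r.
- by rewrite !mulrDr addrACA.
Qed.

Lemma idempotent_central_coprime e m n :
  idempotent_el e -> coprime m n -> e *+ m = 0 -> (1 - e) *+ n = 0 -> central e.
Proof.
move=> ee cop em fn x; set f := 1 - e in fn *.
have ef1 : e + f = 1 by rewrite addrC subrK.
clearbody f.
have efx y : e * y * f = 0.
  apply: (coprime_mulrn_eq0 cop); first by rewrite -!mulrnAl em !mul0r.
  by rewrite -mulrnAr fn mulr0.
have fex y : f * y * e = 0.
  apply: (coprime_mulrn_eq0 cop); first by rewrite -mulrnAr em mulr0.
  by rewrite -!mulrnAl fn !mul0r.
rewrite /GRing.comm; transitivity (e * x * e).
  by rewrite -{1}[e * x]mulr1 -ef1 mulrDr efx addr0.
by rewrite -[x * e]mul1r -ef1 mulrDl !mulrA fex addr0.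
Qed.

Lemma nilpotent_two_add_idem e :
  (2 : R) \isn't a GRing.unit -> idempotent_el e -> nilpotent_el (2 + e) ->
  [/\ central e, 1 - e != 0 & nilpotent_el ((1 - e) *+ 2)].
Proof.
move=> u2 ee nq; set f := 1 - e.
have ff : idempotent_el f by rewrite /idempotent_el mulrBr mulr1 mulrBl mul1r ee !subrr subr0.
have cq : GRing.comm e (2 + e) by apply/commrD; [exact: commr_nat | exact: commr_refl].
have n3e : nilpotent_el (e *+ 3).
  have -> : e *+ 3 = e * (2 + e) by rewrite mulrDr mulr_natr ee -mulrSr.
  exact: nilpotentMl.
have n2f : nilpotent_el (f *+ 2).
  have -> : f *+ 2 = f * (2 + e) by rewrite mulrDr mulr_natr mulrBl mul1r ee subrr addr0.
  by apply: nilpotentMl => //; apply/commr_sym/commrD; [exact: commr1 | exact/commrN/commr_sym].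
have [a ea] := idempotent_nilpotent_mulrn ee n3e.
have [b fb] := idempotent_nilpotent_mulrn ff n2f.
split=> //.
  by apply: (idempotent_central_coprime ee _ ea fb); rewrite coprimeXl // coprimeXr.
apply: contra u2 => /eqP /subr0_eq e1; rewrite -e1 in ea.
exact: (coprime_natr_unit (coprimeXl a (isT : coprime 3 2))).
Qed.

Lemma GSWNC_GSNC : nilpotent_el (2 : R) -> GSWNC R -> GSNC R.
Proof.
move=> n2 H a /H /swncE [//|snc_Na]; rewrite -[a]opprK.
by apply: (sncN_corner central1); rewrite /idempotent_el ?mul1r.
Qed.

Lemma GSWNC_split_swnc c :
  central c -> idempotent_el c -> c != 0 -> 1 - c != 0 -> nilpotent_el ((1 - c) *+ 2) ->
  GSWNC R -> strongly_weakly_nil_clean_ring R.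
Proof.
move=> cc idc c0 f0 n2f H x; set f := 1 - c in f0 n2f *.
have cf : central f by exact: centralC.
have cf0 : c * f = 0 by rewrite mulrBr mulr1 idc subrr.
have fc0 : f * c = 0 by rewrite mulrBl mul1r idc subrr.
have idf : idempotent_el f by rewrite /idempotent_el mulrBr mulr1 fc0 subr0.
have xE : c * (c * x) + f * (f * x) = x by rewrite !mulrA idc idf -mulrDl addrC subrK mul1r.
have snc_f y : strongly_nil_clean_el (f * y).
  have /H /swncE [//|snc_N] := central_mul_nonunit y cf fc0 c0.
  rewrite -[f * y]opprK; apply: (sncN_corner cf) => //.
  by rewrite mulrN mulrA idf.
have snc_Nf y : strongly_nil_clean_el (- (f * y)).
  by apply: (sncN_corner cf) => //; rewrite mulrA idf.
apply/swncE; have /H /swncE [snc_c|snc_Nc] := central_mul_nonunit x cc cf0 f0.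
- by left; rewrite -xE; exact: snc_corner_sum.
- right; rewrite -xE opprD -[- (c * (c * x))]mulrN -[- (f * (f * x))]mulrN.
  exact: snc_corner_sum.
Qed.

End StronglyNilClean.

Theorem lemma2p56 (R : unitRingType) (h2 : (2 : R) \isn't a GRing.unit) :
  GSWNC R <-> GSNC R \/ strongly_weakly_nil_clean_ring R.
Proof.
split=> [H | [G a /G snc_a | S a _]]; [| by apply/swncE; left | exact: S].
have [e [q [ee nq ceq [two_qe|two_qe]]]] := H 2 h2.
- have e0 : e = 0.
    apply: idempotent_nilpotent_eq0 => //.
    have -> : e = e * q by rewrite -[q](addrK e) -two_qe mulrBr ee mulr_natr mulr2n addrK.
    exact: nilpotentMl.
  by left; apply: GSWNC_GSNC; rewrite // two_qe e0 addr0.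
- have [e0|nz_e] := eqVneq e 0.
    by left; apply: GSWNC_GSNC; rewrite // two_qe e0 subr0.
  have n2e : nilpotent_el (2 + e) by rewrite two_qe subrK.
  have [ce nz_f n2f] := nilpotent_two_add_idem h2 ee n2e.
  by right; exact: GSWNC_split_swnc ce ee nz_e nz_f n2f H.
Qed.
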